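(* Let $C$ be a single-qubit Pauli-Square-Root Clifford of order $2$ (i.e. $C^2=I$) and let $|\psi\rangle$ be a $+1$ eigenstate of $C$. Define the twirling map $\mathcal{T}_C(\rho)=\frac12\big(\rho+C\rho C^{\dagger}\big)$. Then for any single-qubit quantum channel $\mathcal{E}$, $$\mathcal{T}_C\circ\mathcal{E}(|\psi\rangle\langle\psi|)=(1-p)|\psi\rangle\langle\psi|+p\,P|\psi\rangle\langle\psi|P^{\dagger}$$ for some Pauli $P$ and some $0\le p\le 1$.
   Context: Paulis are tensor products of $I,X,Y,Z$ times a phase in $\{\pm1,\pm i\}$; a Clifford maps Paulis to Paulis under conjugation. A Pauli-Square-Root Clifford (PSC) is a Clifford that is not a Pauli and whose square is a Pauli. *)

From HB Require Import structures.
From mathcomp Require Import all_boot all_order all_algebra.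
Set Implicit Arguments. Unset Strict Implicit. Unset Printing Implicit Defensive.
Import Order.TTheory GRing.Theory Num.Theory.
Local Open Scope ring_scope.

Section Qubit.
Variable F : numClosedFieldType.

Definition adj m n (A : 'M[F]_(m, n)) : 'M[F]_(n, m) := (map_mx Num.conj A)^T.

Inductive pauli_letter := PI | PX | PY | PZ.

Definition pauli_base (l : pauli_letter) : 'M[F]_2 :=
  match l with
  | PI => 1%:M
  | PX => \matrix_(i, j) (if (i : nat) == j then 0 else 1)
  | PY => \matrix_(i, j) (if (i : nat) == j then 0
                           else if (i : nat) == 0%N then - 'i else 'i)
  | PZ => \matrix_(i, j) (if (i : nat) == j then
                           (if (i : nat) == 0%N then 1 else -1) else 0)
  end.

Definition is_pauli (P : 'M[F]_2) : Prop :=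
  exists (ph : F) (l : pauli_letter),
    ph \in [:: 1; -1; 'i; - 'i] /\ P = ph *: pauli_base l.

Definition is_unitary (U : 'M[F]_2) : Prop := U *m adj U = 1%:M.

Definition is_clifford (U : 'M[F]_2) : Prop :=
  is_unitary U /\ forall P, is_pauli P -> is_pauli (U *m P *m adj U).

Definition is_PSC (U : 'M[F]_2) : Prop :=
  is_clifford U /\ ~ is_pauli U /\ is_pauli (U *m U).

Definition is_channel (E : 'M[F]_2 -> 'M[F]_2) : Prop :=
  exists Ks : seq 'M[F]_2,
    \sum_(K <- Ks) (adj K *m K) = 1%:M /\
    forall rho, E rho = \sum_(K <- Ks) (K *m rho *m adj K).

Definition twirl (U rho : 'M[F]_2) : 'M[F]_2 :=
  2^-1 *: (rho + U *m rho *m adj U).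

End Qubit.

From mathcomp Require Import all_boot all_order all_algebra.
From mathcomp Require Import ring.
Set Implicit Arguments. Unset Strict Implicit. Unset Printing Implicit Defensive.
Import Order.TTheory GRing.Theory Num.Theory.
Local Open Scope ring_scope.

(* Unitarity and C^2 = 1 make C Hermitian; not being a Pauli forces trace zero,
   and the Clifford condition on C X C then forces one of X, Y, Z to
   anticommute with C.  Such a Pauli P sends the +1 eigenvector psi to a -1
   eigenvector P psi orthogonal to it, so C = |psi><psi| - |P psi><P psi| is a
   reflection, and twirling by a reflection keeps only the two diagonal blocks:
   T_C(R) = <psi|R|psi> |psi><psi| + <P psi|R|P psi> P|psi><psi|P^dagger.
   For R = E(|psi><psi|) both weights are nonnegative and they sum to
   tr R = 1. *)

Section ConjugateTranspose.
Variable F : numClosedFieldType.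

Lemma adjE m n (A : 'M[F]_(m, n)) i j : adj A i j = (A j i)^*.
Proof. by rewrite !mxE. Qed.

Lemma adjK m n (A : 'M[F]_(m, n)) : adj (adj A) = A.
Proof. by apply/matrixP => i j; rewrite !adjE conjCK. Qed.

Lemma adj_sub m n (A B : 'M[F]_(m, n)) : adj (A - B) = adj A - adj B.
Proof. by rewrite /adj map_mxB linearB. Qed.

Lemma adj_scale m n (k : F) (A : 'M[F]_(m, n)) : adj (k *: A) = k^* *: adj A.
Proof. by rewrite /adj map_mxZ linearZ. Qed.

Lemma adj_mul m n p (A : 'M[F]_(m, n)) (B : 'M[F]_(n, p)) :
  adj (A *m B) = adj B *m adj A.
Proof. by rewrite /adj map_mxM trmx_mul. Qed.

Lemma adj_row_mx m n1 n2 (A : 'M[F]_(m, n1)) (B : 'M[F]_(m, n2)) :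
  adj (row_mx A B) = col_mx (adj A) (adj B).
Proof. by rewrite /adj map_row_mx tr_row_mx. Qed.

Lemma adj_outer m n (A : 'M[F]_(m, n)) : adj (A *m adj A) = A *m adj A.
Proof. by rewrite adj_mul adjK. Qed.

Lemma unitary_involution_adj n (U : 'M[F]_n) :
  U *m adj U = 1%:M -> U *m U = 1%:M -> adj U = U.
Proof. by move=> Uu UU; rewrite -[adj U]mul1mx -UU -mulmxA Uu mulmx1. Qed.

Lemma outer_sandwich n (u : 'cV[F]_n) (M : 'M[F]_n) :
  u *m adj u *m M *m (u *m adj u) = (adj u *m M *m u) 0 0 *: (u *m adj u).
Proof.
have -> : u *m adj u *m M *m (u *m adj u) = u *m (adj u *m M *m u) *m adj u.
  by rewrite !mulmxA.
by rewrite {1}[adj u *m M *m u]mx11_scalar mul_mx_scalar -scalemxAl.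
Qed.

Lemma form_trace n (u : 'cV[F]_n) (M : 'M[F]_n) :
  (adj u *m M *m u) 0 0 = \tr (M *m (u *m adj u)).
Proof. by rewrite mulmxA mxtrace_mulC -mulmxA /mxtrace big_ord1. Qed.

Lemma form_outer_ge0 m n (u : 'cV[F]_m) (K : 'M[F]_(m, n)) (v : 'cV[F]_n) :
  0 <= (adj u *m (K *m (v *m adj v) *m adj K) *m u) 0 0.
Proof.
have -> : adj u *m (K *m (v *m adj v) *m adj K) *m u =
    (adj u *m K *m v) *m adj (adj u *m K *m v) by rewrite !adj_mul adjK !mulmxA.
by rewrite !mxE big_ord1 !mxE mul_conjC_ge0.
Qed.

End ConjugateTranspose.

Lemma add_reflection_conj (R : pzRingType) (p q r : R) : p + q = 1 ->
  r + (p - q) * r * (p - q) = (p * r * p + q * r * q) *+ 2.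
Proof.
move=> pq1; rewrite -{1}[r]mul1r -{1}[r]mulr1 -pq1.
rewrite !(mulrDl, mulrDr, mulrBl, mulrBr) !mulNr !mulrA.
set a := p * r * p; set b := p * r * q; set c := q * r * p; set d := q * r * q.
rewrite [c + d]addrC [a + b + _]addrACA opprB [a - c + _]addrACA -opprD [c + b]addrC.
by rewrite [LHS]addrACA subrr addr0 mulr2n.
Qed.

Section Qubit.
Variable F : numClosedFieldType.

Lemma ord2P (i : 'I_2) : i = 0 \/ i = 1.
Proof. by case: i => [[|[|i]] Hi]; [left; apply: val_inj|right; apply: val_inj|]. Qed.

Lemma mx2P (A B : 'M[F]_2) : A 0 0 = B 0 0 -> A 0 1 = B 0 1 -> A 1 0 = B 1 0 ->
  A 1 1 = B 1 1 -> A = B.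
Proof.
move=> e00 e01 e10 e11; apply/matrixP => i j.
by case: (ord2P i) => ->; case: (ord2P j) => ->.
Qed.

Lemma mul2E m p (A : 'M[F]_(m, 2)) (B : 'M[F]_(2, p)) i j :
  (A *m B) i j = A i 0 * B 0 j + A i 1 * B 1 j.
Proof.
rewrite !mxE !big_ord_recl big_ord0 addr0.
by have -> : lift ord0 ord0 = 1 :> 'I_2 by exact: val_inj.
Qed.

Lemma pauli_phase_unit (ph : F) : ph \in [:: 1; -1; 'i; - 'i] -> ph^* * ph = 1.
Proof.
rewrite mulrC -normCK !inE => /or4P [] /eqP ->;
  by rewrite ?normrN ?normr1 ?normCi expr1n.
Qed.

Lemma pauli_unitary (P : 'M[F]_2) : is_pauli P -> adj P *m P = 1%:M.
Proof.
move=> [ph [l [ph_in ->]]].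
rewrite adj_scale -scalemxAl -scalemxAr scalerA pauli_phase_unit // scale1r.
case: l; apply: mx2P; rewrite !mul2E !adjE !mxE /= ?conjC0 ?mulr0 ?mul0r ?addr0 ?add0r //;
  by rewrite mulrC -normCK ?normrN ?normr1 ?normCi expr1n.
Qed.

Lemma orthonormal_pair_complete (psi phi : 'cV[F]_2) :
  adj psi *m psi = 1%:M -> adj phi *m phi = 1%:M -> adj psi *m phi = 0 ->
  psi *m adj psi + phi *m adj phi = 1%:M.
Proof.
move=> psi_unit phi_unit orth.
have orth' : adj phi *m psi = 0.
  by rewrite -[psi]adjK -adj_mul orth /adj map_mx0 trmx0.
have U_unitary : adj (row_mx psi phi) *m row_mx psi phi = 1%:M :> 'M_(1 + 1).
  by rewrite adj_row_mx mul_col_row psi_unit phi_unit orth orth' -scalar_mx_block.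
by have := mulmx1C U_unitary; rewrite adj_row_mx mul_row_col.
Qed.

Lemma twirl_reflection (psi phi : 'cV[F]_2) (R : 'M[F]_2) :
  psi *m adj psi + phi *m adj phi = 1%:M ->
  twirl (psi *m adj psi - phi *m adj phi) R =
    (adj psi *m R *m psi) 0 0 *: (psi *m adj psi) +
    (adj phi *m R *m phi) 0 0 *: (phi *m adj phi).
Proof.
move=> complete; rewrite /twirl adj_sub !adj_outer !mulmxE add_reflection_conj //.
rewrite -!mulmxE !outer_sandwich -scaler_nat scalerA mulVf ?scale1r //.
by rewrite pnatr_eq0.
Qed.

Section Channel.
Variable E : 'M[F]_2 -> 'M[F]_2.
Hypothesis E_channel : is_channel E.

Lemma channel_trace rho : \tr (E rho) = \tr rho.
Proof.
have [Ks [Ks_sum ->]] := E_channel.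
rewrite raddf_sum (eq_bigr (fun K => \tr (adj K *m K *m rho))) => [|K _].
  by rewrite -raddf_sum -mulmx_suml Ks_sum mul1mx.
by rewrite /= mxtrace_mulC mulmxA.
Qed.

Lemma channel_pure_form_ge0 (u v : 'cV[F]_2) :
  0 <= (adj u *m E (v *m adj v) *m u) 0 0.
Proof.
have [Ks [_ ->]] := E_channel.
rewrite mulmx_sumr mulmx_suml summxE.
by apply: sumr_ge0 => K _; apply: form_outer_ge0.
Qed.

End Channel.

Section AnticommutingReflection.
Variables (C P : 'M[F]_2) (psi : 'cV[F]_2).
Hypotheses (C_herm : adj C = C) (P_unitary : adj P *m P = 1%:M).
Hypotheses (PC_anti : P *m C = - (C *m P)) (psi_unit : adj psi *m psi = 1%:M).
Hypothesis C_psi : C *m psi = psi.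

Local Notation phi := (P *m psi).

Lemma anticomm_eigenvector : C *m phi = - phi.
Proof.
have CP_anti : C *m P = - (P *m C) by rewrite PC_anti opprK.
by rewrite mulmxA CP_anti mulNmx -mulmxA C_psi.
Qed.

Lemma anticomm_orthogonal : adj psi *m phi = 0.
Proof.
have anti : adj psi *m phi = - (adj psi *m phi).
  by rewrite -{1}C_psi adj_mul C_herm -mulmxA anticomm_eigenvector mulmxN.
have : (2%:R : F) *: (adj psi *m phi) = 0 by rewrite scaler_nat mulr2n {1}anti addNr.
by move/eqP; rewrite scalemx_eq0 pnatr_eq0 /= => /eqP.
Qed.

Lemma anticomm_complete : psi *m adj psi + phi *m adj phi = 1%:M.
Proof.
apply: orthonormal_pair_complete anticomm_orthogonal => //.
by rewrite adj_mul mulmxA -(mulmxA (adj psi)) P_unitary mulmx1.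
Qed.

Lemma anticomm_reflection : C = psi *m adj psi - phi *m adj phi.
Proof.
rewrite -[C]mulmx1 -anticomm_complete mulmxDr !mulmxA C_psi.
by rewrite -(mulmxA C P) anticomm_eigenvector mulNmx.
Qed.

End AnticommutingReflection.

Lemma pauli_base_pauli l : is_pauli (pauli_base F l).
Proof. by exists 1, l; rewrite scale1r inE eqxx. Qed.

Section HermitianInvolution.
Variable C : 'M[F]_2.
Hypotheses (C_herm : adj C = C) (CC : C *m C = 1%:M) (C_nonpauli : ~ is_pauli C).

Lemma herm_entry i j : (C i j)^* = C j i.
Proof. by rewrite -adjE C_herm. Qed.

Lemma involution_traceless : C 1 1 = - C 0 0.
Proof.
have CCE i j : (C *m C) i j = (1%:M : 'M[F]_2) i j by rewrite CC.
move: (CCE 0 0) (CCE 0 1) (CCE 1 1).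
rewrite !mul2E !mxE /= mulr1n mulr0n => e00 e01 e11.
have : C 0 1 * (C 0 0 + C 1 1) = 0 by rewrite -e01; ring.
move/eqP; rewrite mulf_eq0 => /orP [/eqP w0 | ]; last by rewrite addrC addr_eq0 => /eqP.
have w0' : C 1 0 = 0 by rewrite -herm_entry w0 conjC0.
rewrite w0 w0' mul0r addr0 in e00; rewrite w0 mulr0 add0r in e11.
have : (C 0 0 - C 1 1) * (C 0 0 + C 1 1) = 0 by rewrite -subr_sqr !expr2 e00 e11 subrr.
move/eqP; rewrite mulf_eq0 => /orP [|]; last by rewrite addrC addr_eq0 => /eqP.
(* Otherwise C is the scalar C 0 0 = 1 or -1, which is a Pauli. *)
rewrite subr_eq0 => /eqP z_eq; exfalso; apply: C_nonpauli; exists (C 0 0), PI; split.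
  have : C 0 0 ^+ 2 == 1 by rewrite expr2 e00.
  by rewrite sqrf_eq1 => /orP [] /eqP ->; rewrite !inE eqxx ?orbT.
by apply: mx2P; rewrite !mxE /= ?mulr1 ?mulr0 // -z_eq.
Qed.

Lemma conjX_pauli_entries : is_pauli (C *m pauli_base F PX *m adj C) ->
  C 0 0 = 0 \/ (C 0 1)^* = - C 0 1 \/ (C 0 1)^* = C 0 1.
Proof.
(* With z := C 0 0, w := C 0 1 and w' its conjugate, C X C has diagonal
   (z (w + w'), - z (w + w')) and off-diagonal (w^2 - z^2, w'^2 - z^2); being a
   multiple of I, X or Y kills the diagonal, a multiple of Z forces w^2 = w'^2. *)
move=> [ph [l [_ CXC]]].
have CXCE i j : (C *m pauli_base F PX *m C) i j = (ph *: pauli_base F l) i j.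
  by rewrite -CXC C_herm.
have : C 0 0 * (C 0 1 + (C 0 1)^*) = 0 \/
       (C 0 1 - (C 0 1)^*) * (C 0 1 + (C 0 1)^*) = 0.
  move: (CXCE 0 0) (CXCE 0 1) (CXCE 1 0) (CXCE 1 1).
  rewrite !mul2E !mxE /= -[C 1 0]herm_entry involution_traceless.
  case: l {CXC CXCE}; rewrite !mxE /= ?mulr1n ?mulr0n;
    rewrite ?mulr0 ?mul0r ?addr0 ?add0r ?mulr1 ?mul1r => h00 h01 h10 h11.
  - left; have : (C 0 0 * (C 0 1 + (C 0 1)^*)) *+ 2 = 0.
      by rewrite -(subrr ph) -[X in _ = X - _]h00 -[X in _ = _ - X]h11; ring.
    by move/eqP; rewrite mulrn_eq0 /= => /eqP.
  - by left; rewrite -h00; ring.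
  - by left; rewrite -h00; ring.
  - by right; rewrite -(subrr (0 : F)) -[X in _ = X - _]h01 -[X in _ = _ - X]h10; ring.
move=> [|] /eqP; rewrite mulf_eq0 => /orP [] /eqP h.
- by left.
- by right; left; apply/eqP; rewrite -addr_eq0 addrC h.
- by right; right; apply/eqP; rewrite eq_sym -subr_eq0 h.
- by right; left; apply/eqP; rewrite -addr_eq0 addrC h.
Qed.

Lemma psc_anticomm_pauli : is_pauli (C *m pauli_base F PX *m adj C) ->
  exists2 P, is_pauli P & P *m C = - (C *m P).
Proof.
(* Z, X, Y anticommute with [[z, w], [w', -z]] when z = 0, w' = -w, w' = w. *)
move=> /conjX_pauli_entries [h | [h | h]];
  [exists (pauli_base F PZ) | exists (pauli_base F PX) | exists (pauli_base F PY)];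
  try exact: pauli_base_pauli.
all: rewrite -mulmxN; apply: mx2P; rewrite !mul2E !mxE /=.
all: by rewrite -?[C 1 0]herm_entry ?involution_traceless ?h; ring.
Qed.

End HermitianInvolution.
End Qubit.

Unset Implicit Arguments.

Theorem proposition4 (F : numClosedFieldType) (C : 'M[F]_2) (psi : 'cV[F]_2)
    (E : 'M[F]_2 -> 'M[F]_2) :
  is_PSC C -> C *m C = 1%:M ->
  adj psi *m psi = 1%:M -> C *m psi = psi ->
  is_channel E ->
  exists (P : 'M[F]_2) (p : F),
    is_pauli P /\ 0 <= p <= 1 /\
    twirl C (E (psi *m adj psi)) =
      (1 - p) *: (psi *m adj psi) + p *: (P *m (psi *m adj psi) *m adj P).
Proof.
move=> [[C_unitary C_clifford] [C_nonpauli _]] CC psi_unit C_psi E_channel.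
have C_herm := unitary_involution_adj C_unitary CC.
have [P P_pauli PC_anti] :=
  psc_anticomm_pauli C_herm CC C_nonpauli (C_clifford _ (pauli_base_pauli _ PX)).
have P_unitary := pauli_unitary P_pauli.
have complete := anticomm_complete C_herm P_unitary PC_anti psi_unit C_psi.
set rho := psi *m adj psi; set R := E rho.
set x : F := (adj psi *m R *m psi) 0 0.
set y : F := (adj (P *m psi) *m R *m (P *m psi)) 0 0.
have x_ge0 : 0 <= x by apply: channel_pure_form_ge0.
have y_ge0 : 0 <= y by apply: channel_pure_form_ge0.
have xy1 : x + y = 1.
  rewrite /x /y !form_trace -mxtraceD -mulmxDr complete mulmx1 channel_trace //.
  by rewrite mxtrace_mulC psi_unit mxtrace1.
exists P, y; split=> //; split; first by rewrite y_ge0 -xy1 lerDr.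
rewrite (anticomm_reflection C_herm P_unitary PC_anti psi_unit C_psi).
by rewrite twirl_reflection // -/x -/y -xy1 addrK /rho adj_mul !mulmxA.
Qed.
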